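(* Let $R\in(0,\pi/2)$ and let $\boldsymbol f=(f_1,f_2)$ be the solution on $(0,\pi)$ of \[\boldsymbol f'=\frac{1}{\sin s}\begin{pmatrix}-3\cos s&3\cos s\\ \cos R-\cos s&\cos s-\cos R\end{pmatrix}\boldsymbol f,\qquad \boldsymbol f(R)\sin^4R=\cos R\,(3,2).\] Then $h(s):=f_2(s)\sin^3s$ is nonnegative on $[R,\pi)$. *)

From Stdlib Require Import Reals.
Open Scope R_scope.

(* Write g := f2 - f1.  Subtracting the two equations gives the scalar linear
   equation g' = -(cos R + 2 cos s) g / sin s, whose coefficient has the
   antiderivative -(cos R ln tan(s/2) + 2 ln sin s); hence g is g(R) times an
   exponential and keeps the sign of g(R) = -cos R / sin^4 R < 0 on [R, pi).  Then
   f2' = (cos s - cos R) g / sin s >= 0 there, because cos is decreasing, so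
   f2 increases from f2(R) = 2 cos R / sin^4 R > 0. *)
From Stdlib Require Import Reals Lra Psatz.
Open Scope R_scope.

Lemma derivable_pt_lim_eq (f : R -> R) x l l' :
  l = l' -> derivable_pt_lim f x l -> derivable_pt_lim f x l'.
Proof. now intros ->. Qed.

Lemma le_of_derivative_nonneg (f df : R -> R) a b :
  a <= b ->
  (forall x, a <= x <= b -> derivable_pt_lim f x (df x)) ->
  (forall x, a < x < b -> 0 <= df x) ->
  f a <= f b.
Proof.
  intros Hab Hf Hdf.
  destruct (Rle_lt_or_eq_dec a b Hab) as [Hlt | <-]; [| lra].
  destruct (MVT_cor2 f df a b Hlt Hf) as [c [Hc Hac]].
  pose proof (Hdf c Hac). nra.
Qed.

Lemma eq_of_derivative_zero (f : R -> R) a b :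
  a <= b -> (forall x, a <= x <= b -> derivable_pt_lim f x 0) -> f a = f b.
Proof.
  intros Hab Hf.
  destruct (Rle_lt_or_eq_dec a b Hab) as [Hlt | <-]; [| reflexivity].
  destruct (MVT_cor2 f (fun _ => 0) a b Hlt Hf) as [c [Hc _]]. lra.
Qed.

Lemma linear_ode_solution (g a A : R -> R) lo hi :
  (forall x, lo < x < hi -> derivable_pt_lim g x (a x * g x)) ->
  (forall x, lo < x < hi -> derivable_pt_lim A x (a x)) ->
  forall x y, lo < x <= y -> y < hi -> g y = g x * exp (A y - A x).
Proof.
  intros Hg HA x y Hx Hy.
  set (h := fun t => g t * exp (- A t)).
  assert (Hh : h x = h y).
  { apply eq_of_derivative_zero; [lra |]. intros t Ht.
    assert (Hexp := derivable_pt_lim_comp _ exp t _ _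
      (derivable_pt_lim_opp _ _ _ (HA t ltac:(lra))) (derivable_pt_lim_exp _)).
    eapply derivable_pt_lim_eq;
      [| exact (derivable_pt_lim_mult _ _ _ _ _ (Hg t ltac:(lra)) Hexp)].
    unfold comp, opp_fct. ring. }
  unfold h in Hh.
  replace (A y - A x) with (- A x + - - A y) by ring.
  rewrite exp_plus, <- Rmult_assoc, Hh, Rmult_assoc, <- exp_plus.
  replace (- A y + - - A y) with 0 by ring.
  rewrite exp_0. ring.
Qed.

Lemma cos_lt_1 s : 0 < s <= PI -> cos s < 1.
Proof.
  intros Hs. rewrite <- cos_0.
  apply cos_decreasing_1; lra.
Qed.

(* [ln_tan_half x = ln (tan (x / 2))], an antiderivative of [1 / sin]. *)
Definition ln_tan_half (x : R) : R := ln (1 - cos x) - ln (sin x).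

Lemma derivable_pt_lim_ln_tan_half s :
  0 < s < PI -> derivable_pt_lim ln_tan_half s (1 / sin s).
Proof.
  intros Hs.
  pose proof (sin_gt_0 s (proj1 Hs) (proj2 Hs)) as Hsin.
  assert (Hpos : 0 < 1 - cos s) by (pose proof (cos_lt_1 s ltac:(lra)); lra).
  assert (H1 : derivable_pt_lim (fun x => 1 - cos x) s (0 - - sin s)).
  { apply (derivable_pt_lim_minus (fun _ => 1) cos).
    - apply derivable_pt_lim_const.
    - apply derivable_pt_lim_cos. }
  assert (Hnum := derivable_pt_lim_comp _ ln s _ _ H1
                    (derivable_pt_lim_ln _ Hpos)).
  assert (Hden := derivable_pt_lim_comp _ ln s _ _ (derivable_pt_lim_sin s)
                    (derivable_pt_lim_ln _ Hsin)).
  eapply derivable_pt_lim_eq; [| exact (derivable_pt_lim_minus _ _ _ _ _ Hnum Hden)].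
  pose proof (sin2_cos2 s). unfold Rsqr in *.
  field_simplify_eq; [nra | split; lra].
Qed.

Lemma derivable_pt_lim_ln_sin s :
  0 < s < PI -> derivable_pt_lim (fun x => ln (sin x)) s (cos s / sin s).
Proof.
  intros Hs.
  pose proof (sin_gt_0 s (proj1 Hs) (proj2 Hs)) as Hsin.
  eapply derivable_pt_lim_eq; [| exact (derivable_pt_lim_comp _ ln s _ _
    (derivable_pt_lim_sin s) (derivable_pt_lim_ln _ Hsin))].
  field. lra.
Qed.

Lemma derivable_pt_lim_difference_exponent c s :
  0 < s < PI ->
  derivable_pt_lim (fun x => - (c * ln_tan_half x + 2 * ln (sin x))) s
    (- (c + 2 * cos s) / sin s).
Proof.
  intros Hs.
  pose proof (sin_gt_0 s (proj1 Hs) (proj2 Hs)) as Hsin.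
  assert (Hsum := derivable_pt_lim_plus _ _ _ _ _
    (derivable_pt_lim_scal _ c _ _ (derivable_pt_lim_ln_tan_half s Hs))
    (derivable_pt_lim_scal _ 2 _ _ (derivable_pt_lim_ln_sin s Hs))).
  eapply derivable_pt_lim_eq; [| exact (derivable_pt_lim_opp _ _ _ Hsum)].
  field. lra.
Qed.

Section RadialSystem.

Variables (r : R) (f1 f2 : R -> R).
Hypothesis r_pos : 0 < r.
Hypothesis f_ode : forall s, 0 < s < PI ->
  derivable_pt_lim f1 s ((- 3 * cos s * f1 s + 3 * cos s * f2 s) / sin s) /\
  derivable_pt_lim f2 s (((cos r - cos s) * f1 s + (cos s - cos r) * f2 s) / sin s).

Lemma derivable_pt_lim_f2_sub_f1 t : 0 < t < PI ->
  derivable_pt_lim (fun x => f2 x - f1 x) t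
    (- (cos r + 2 * cos t) / sin t * (f2 t - f1 t)).
Proof.
  intros Ht. destruct (f_ode t Ht) as [H1 H2].
  eapply derivable_pt_lim_eq; [| exact (derivable_pt_lim_minus _ _ _ _ _ H2 H1)].
  field. apply Rgt_not_eq, sin_gt_0; lra.
Qed.

Lemma f2_sub_f1_lt0 :
  f2 r - f1 r < 0 -> forall x, r <= x < PI -> f2 x - f1 x < 0.
Proof.
  intros Hr x Hx.
  assert (Hsol := linear_ode_solution _ _ _ 0 PI derivable_pt_lim_f2_sub_f1
    (derivable_pt_lim_difference_exponent (cos r)) r x ltac:(lra) ltac:(lra)).
  cbv beta in Hsol. rewrite Hsol.
  pose proof (exp_pos (- (cos r * ln_tan_half x + 2 * ln (sin x))
                       - - (cos r * ln_tan_half r + 2 * ln (sin r)))).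
  nra.
Qed.

Lemma f2_nondecreasing :
  f2 r - f1 r < 0 -> forall s, r <= s < PI -> f2 r <= f2 s.
Proof.
  intros Hr s Hs.
  apply (le_of_derivative_nonneg f2
    (fun t => ((cos r - cos t) * f1 t + (cos t - cos r) * f2 t) / sin t));
    [lra | intros t Ht; apply f_ode; lra |].
  intros t Ht.
  assert (Hsint : 0 < sin t) by (apply sin_gt_0; lra).
  assert (Hcost : cos t < cos r) by (apply cos_decreasing_1; lra).
  pose proof (f2_sub_f1_lt0 Hr t ltac:(lra)).
  apply Rmult_le_pos; [nra | apply Rlt_le, Rinv_0_lt_compat; lra].
Qed.

End RadialSystem.

Theorem lemma3p6 (r : R) (f1 f2 : R -> R) :
  0 < r < PI / 2 ->
  (forall s, 0 < s < PI ->
     derivable_pt_lim f1 s ((- 3 * cos s * f1 s + 3 * cos s * f2 s) / sin s) /\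
     derivable_pt_lim f2 s (((cos r - cos s) * f1 s + (cos s - cos r) * f2 s) / sin s)) ->
  f1 r * sin r ^ 4 = cos r * 3 ->
  f2 r * sin r ^ 4 = cos r * 2 ->
  forall s, r <= s < PI -> 0 <= f2 s * sin s ^ 3.
Proof.
  intros Hr Hf Hf1r Hf2r s Hs.
  assert (Hcosr : 0 < cos r) by (apply cos_gt_0; lra).
  assert (Hsinr4 : 0 < sin r ^ 4) by (apply pow_lt, sin_gt_0; lra).
  assert (Hdiff_r : f2 r - f1 r < 0) by nra.
  assert (Hf2r_pos : 0 < f2 r) by nra.
  pose proof (f2_nondecreasing r f1 f2 ltac:(lra) Hf Hdiff_r s Hs).
  assert (Hsins3 : 0 < sin s ^ 3) by (apply pow_lt, sin_gt_0; lra).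
  nra.
Qed.
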